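(* Let $\lambda\in[0,1]$. For every $\alpha$ with $1\le\alpha<\frac{\sqrt{\lambda^2-2\lambda+5}-\lambda+1}{2}$, there exists an instance with the weighted single metric loss with parameter $\lambda$ in which no clustering is in the $\alpha$-core.
   Context: Instance: finite nonempty set $\mathcal{N}$ of $n$ agents, finite nonempty set $\mathcal{M}$ of feasible centers, positive integer $k$, pseudometric $d$ on $\mathcal{N}\cup\mathcal{M}$. Weighted single metric loss: $\ell_i(C,x)=\lambda\max_{j\in C}d(i,j)+(1-\lambda)d(i,x)$ for $i\in C\subseteq\mathcal{N}$, $x\in\mathcal{M}$. A clustering is $\mathcal{X}=\{(C_1,x_1),\dots,(C_k,x_k)\}$ with $C_t$ pairwise disjoint (some possibly empty), union $\mathcal{N}$, $x_t\in\mathcal{M}$; $\ell_i(\mathcal{X})=\ell_i(C_t,x_t)$ where $i\in C_t$. For $\alpha\ge1$, $\mathcal{X}$ is in the $\alpha$-core if there is no $S\subseteq\mathcal{N}$ with $|S|\ge n/k$ and $y\in\mathcal{M}$ with $\alpha\,\ell_i(S,y)<\ell_i(\mathcal{X})$ for all $i\in S$. *)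

From HB Require Import structures.
From mathcomp Require Import all_boot all_order all_algebra.
From mathcomp Require Import Rstruct.
From Stdlib Require Import Rdefinitions.
Set Implicit Arguments. Unset Strict Implicit. Unset Printing Implicit Defensive.
Import Order.TTheory GRing.Theory Num.Theory.
Local Open Scope ring_scope.

(* Points are agents (inl) or feasible centers (inr). *)
Definition pt (N M : finType) := (N + M)%type.

Definition is_pseudometric (T : Type) (d : T -> T -> R) : Prop :=
  (forall x, d x x = 0) /\
  (forall x y, 0 <= d x y) /\
  (forall x y, d x y = d y x) /\
  (forall x y z, d x z <= d x y + d y z).

Record instance := Instance {
  agents : finType;
  centers : finType;
  kk : nat;
  dist : pt agents centers -> pt agents centers -> R;
  agents_nonempty : leq 1 #|agents|;
  centers_nonempty : leq 1 #|centers|;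
  k_pos : leq 1 kk;
  dist_pseudo : is_pseudometric dist }.

Definition wloss (I : instance) (lam : R) (C : {set agents I}) (x : centers I)
    (i : agents I) : R :=
  lam * (\big[Num.max/0]_(j in C) dist (inl i) (inl j))
  + (1 - lam) * dist (inl i) (inr x).

(* A clustering: each agent is assigned to one of k clusters (clusters may be
   empty), and each cluster t has a center ctr t. *)
Record clustering (I : instance) := Clustering {
  assign : agents I -> 'I_(kk I);
  ctr : 'I_(kk I) -> centers I }.

Definition cluster_of (I : instance) (X : clustering I) (t : 'I_(kk I))
  : {set agents I} := [set i | assign X i == t].

Definition loss_in (I : instance) (lam : R) (X : clustering I) (i : agents I) : R :=
  wloss lam (cluster_of X (assign X i)) (ctr X (assign X i)) i.

Definition in_core (I : instance) (lam alpha : R) (X : clustering I) : Prop :=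
  ~ exists (S : {set agents I}) (y : centers I),
      (#|S|%:R >= #|agents I|%:R / (kk I)%:R :> R) /\
      forall i, i \in S -> alpha * wloss lam S y i < loss_in lam X i.

From HB Require Import structures.
From mathcomp Require Import all_boot all_order all_algebra.
From mathcomp Require Import Rstruct.
From mathcomp Require Import ring lra zify.
From Stdlib Require Import Rdefinitions.
Set Implicit Arguments.
Unset Strict Implicit.
Unset Printing Implicit Defensive.

Import Order.TTheory GRing.Theory Num.Theory.
Local Open Scope ring_scope.

(* Take k = 3 and two far-apart copies of a gadget with agents a_0, a_1, a_2
   and centers y_0, y_1, y_2: the agents are pairwise at distance 3 + λ, and
   a_i is at distance 1, 2 + λ, 4 + λ from y_i, y_(i-1), y_(i+1); an agent
   served from the other copy pays at least 4.  The coalition {a_i, a_(i+1)}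
   with center y_i has losses (1 + λ)^2 and 2(1 + λ).  Some copy hosts at most
   one of the three centers.  If at most one of its agents is served inside
   it, two cyclically adjacent agents pay at least 4 and block.  Otherwise two
   of its agents share the unique local cluster, centered at some y_k, and
   a_(k+1), a_(k+2) pay at least 2(1 + λ) and 4, so they block.  Both blocks
   only need α(1 + λ) < 2, which is what the bound on α gives. *)

Lemma alpha_mul_lt2 (lam alpha : R) : 0 <= lam -> 1 <= alpha ->
  alpha < (Num.sqrt (lam ^+ 2 - 2 * lam + 5) - lam + 1) / 2 ->
  alpha * (1 + lam) < 2.
Proof.
move=> lam0 alpha1; set D := _ + 5 => alpha_lt.
have D_gt0 : 0 < D by rewrite /D; nra.
have u_lt : 2 * alpha + lam - 1 < Num.sqrt D by lra.
have u_sq_lt : (2 * alpha + lam - 1) ^+ 2 < D.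
  by rewrite -ltr_sqrt // sqrtr_sqr ger0_norm //; lra.
have : alpha * (alpha + lam - 1) < 1 by rewrite /D in u_sq_lt; nra.
(* alpha * (1 + lam) = alpha * (alpha + lam - 1) + 1 - (alpha - 1)^2 *)
nra.
Qed.

Lemma alpha_pair_costs (lam alpha : R) :
  0 <= lam -> lam <= 1 -> alpha * (1 + lam) < 2 ->
  [/\ alpha * (1 + lam) ^+ 2 < 2 * (1 + lam), alpha * (1 + lam) ^+ 2 < 4
     & alpha * (2 * (1 + lam)) < 4].
Proof.
move=> lam0 lam1 alpha_lt.
have cost_own : alpha * (1 + lam) ^+ 2 < 2 * (1 + lam).
  by rewrite expr2 mulrA ltr_pM2r //; lra.
by split; [| lra | rewrite mulrCA; lra].
Qed.

Section Coalitions.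
Variable I : instance.
Implicit Types (lam alpha : R) (a b : agents I) (y : centers I) (X : clustering I).

Lemma dist_refl (x : pt (agents I) (centers I)) : dist x x = 0.
Proof. by case: (dist_pseudo I). Qed.

Lemma dist_ge0 (x z : pt (agents I) (centers I)) : 0 <= dist x z.
Proof. by case: (dist_pseudo I) => _ []. Qed.

Lemma dist_sym (x z : pt (agents I) (centers I)) : dist x z = dist z x.
Proof. by case: (dist_pseudo I) => _ [_ []]. Qed.

Lemma loss_in_ge_mate lam X a b : 0 <= lam -> assign X b = assign X a ->
  lam * dist (inl a) (inl b) + (1 - lam) * dist (inl a) (inr (ctr X (assign X a)))
  <= loss_in lam X a.
Proof.
move=> lam0 ab; rewrite /loss_in /wloss lerD2r ler_wpM2l //.
by apply: (le_bigmax_cond _ (fun j => dist (inl a) (inl j))); rewrite inE ab.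
Qed.

Lemma wloss_pair_le lam a b y : 0 <= lam ->
  wloss lam [set a; b] y a
  <= lam * dist (inl a) (inl b) + (1 - lam) * dist (inl a) (inr y).
Proof.
move=> lam0; rewrite /wloss lerD2r ler_wpM2l // bigmax_le ?dist_ge0 //.
by move=> j /set2P[->|->]; rewrite ?dist_refl ?dist_ge0.
Qed.

Lemma blocking_pair lam alpha X a b y : 0 <= lam -> 0 <= alpha -> a != b ->
  #|agents I|%:R / (kk I)%:R <= 2 :> R ->
  alpha * (lam * dist (inl a) (inl b) + (1 - lam) * dist (inl a) (inr y))
    < loss_in lam X a ->
  alpha * (lam * dist (inl a) (inl b) + (1 - lam) * dist (inl b) (inr y))
    < loss_in lam X b ->
  ~ in_core lam alpha X.
Proof.
move=> lam0 alpha0 ab quota lt_a lt_b; apply; exists [set a; b], y; split.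
  by rewrite cards2 ab.
move=> i /set2P[->|->]; [apply: le_lt_trans lt_a | apply: le_lt_trans lt_b].
  by rewrite ler_wpM2l // wloss_pair_le.
by rewrite ler_wpM2l // setUC dist_sym wloss_pair_le.
Qed.

End Coalitions.

Lemma bool_fiber_le1 (T : finType) (f : T -> bool) :
  (#|T| <= 3)%nat -> exists b, (#|[set t | f t == b]| <= 1)%nat.
Proof.
move=> T3; have := cardsC [set t | f t == true].
have -> : ~: [set t | f t == true] = [set t | f t == false].
  by apply/setP => t; rewrite !inE; case: (f t).
case: (leqP #|[set t | f t == true]| 1) => [|gt1 sum]; first by exists true.
by exists false; lia.
Qed.

Lemma ord3_neq_add1 (i : 'I_3) : i != i + 1.
Proof. by case: i => [[|[|[|]]] ?]. Qed.

Lemma ord3_adjacent (i j : 'I_3) : i != j -> j = i + 1 \/ i = j + 1.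
Proof.
case: i j => [[|[|[|//]]] ?] [[|[|[|//]]] ?] //= _;
  first [left; exact: val_inj | right; exact: val_inj].
Qed.

Definition site : finType := (bool * 'I_3)%type.

Definition copy (x : pt site site) : bool :=
  match x with inl a => a.1 | inr y => y.1 end.

Definition slot (x : pt site site) : bool * 'I_3 :=
  match x with inl a => (false, a.2) | inr y => (true, y.2) end.

(* Distances inside a copy are p + q * lam with (p, q) = slot_coef; as (p, q)
   satisfies the triangle inequality componentwise, so does p + q * lam. *)
Definition offset_coef (m : 'I_3) : nat * nat :=
  match val m with 0 => (1, 0) | 1 => (2, 1) | _ => (4, 1) end%nat.

Definition slot_coef (u v : bool * 'I_3) : nat * nat :=
  match u, v with
  | (false, i), (true, j) | (true, j), (false, i) => offset_coef (i - j)
  | (_, i), (_, j) => if i == j then (0, 0)%nat else (3, 1)%nat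
  end.

(* No result type: [: R] would parse the body in Stdlib's [R_scope]. *)
Definition slot_dist (lam : R) (u v : bool * 'I_3) :=
  (slot_coef u v).1%:R + (slot_coef u v).2%:R * lam.

Definition gadget_dist (lam K : R) (x z : pt site site) : R :=
  if copy x == copy z then slot_dist lam (slot x) (slot z) else K.

Lemma slot_coef_refl u : slot_coef u u = (0, 0)%nat.
Proof. by case: u => [[] [[|[|[|]]] ?]]. Qed.

Lemma slot_coef_sym u v : slot_coef u v = slot_coef v u.
Proof. by case: u => [[] [[|[|[|]]] ?]]; case: v => [[] [[|[|[|]]] ?]]. Qed.

Lemma slot_coef_le u v : ((slot_coef u v).1 <= 4)%nat && ((slot_coef u v).2 <= 1)%nat.
Proof. by case: u => [[] [[|[|[|]]] ?]]; case: v => [[] [[|[|[|]]] ?]]. Qed.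

Lemma slot_coef_triangle u v w :
  ((slot_coef u w).1 <= (slot_coef u v).1 + (slot_coef v w).1)%nat &&
  ((slot_coef u w).2 <= (slot_coef u v).2 + (slot_coef v w).2)%nat.
Proof.
by case: u => [[] [[|[|[|]]] ?]]; case: v => [[] [[|[|[|]]] ?]];
   case: w => [[] [[|[|[|]]] ?]].
Qed.

Section SlotDist.
Variable lam : R.
Hypothesis lam0 : 0 <= lam.

Lemma slot_dist_ge0 u v : 0 <= slot_dist lam u v.
Proof. by rewrite /slot_dist addr_ge0 ?mulr_ge0. Qed.

Lemma slot_dist_le u v : lam <= 1 -> slot_dist lam u v <= 5.
Proof.
rewrite /slot_dist; move: (slot_coef_le u v).
move: (slot_coef u v).1 (slot_coef u v).2 => p q.
rewrite -!(ler_nat R) => /andP[p4 q1] lam1.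
by have := ler_wpM2r lam0 q1; rewrite mul1r; lra.
Qed.

Lemma slot_dist_triangle u v w :
  slot_dist lam u w <= slot_dist lam u v + slot_dist lam v w.
Proof.
rewrite /slot_dist; move: (slot_coef_triangle u v w).
move: (slot_coef u w).1 (slot_coef u w).2 (slot_coef u v).1 (slot_coef u v).2.
move: (slot_coef v w).1 (slot_coef v w).2 => p2 q2 p q p1 q1.
rewrite -!(ler_nat R) !natrD => /andP[p_le q_le].
by have := ler_wpM2r lam0 q_le; rewrite mulrDl; lra.
Qed.

End SlotDist.

Lemma gadget_dist_pseudo (lam K : R) :
  0 <= lam -> lam <= 1 -> 5 / 2 <= K -> is_pseudometric (gadget_dist lam K).
Proof.
move=> lam0 lam1 K_ge; rewrite /is_pseudometric /gadget_dist.
split; [|split; [|split]].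
- by move=> x; rewrite eqxx /slot_dist slot_coef_refl mul0r addr0.
- by move=> x z; case: eqP => _; [exact: slot_dist_ge0 | lra].
- by move=> x z; rewrite eq_sym /slot_dist slot_coef_sym.
- move=> x y z.
  have := slot_dist_triangle lam0 (slot x) (slot y) (slot z).
  have := slot_dist_le lam0 (slot x) (slot z) lam1.
  have := slot_dist_ge0 lam0 (slot x) (slot y).
  have := slot_dist_ge0 lam0 (slot y) (slot z).
  by case: (copy x) (copy y) (copy z) => [] [] [] /=; lra.
Qed.

Definition far_dist (lam : R) := 4 / (1 - lam).

Lemma far_dist_ge (lam : R) : 0 <= lam -> lam < 1 -> 5 / 2 <= far_dist lam.
Proof. by move=> lam0 lam1; rewrite /far_dist ler_pdivlMr; lra. Qed.

Lemma far_distK (lam : R) : lam < 1 -> (1 - lam) * far_dist lam = 4.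
Proof. by move=> lam1; rewrite /far_dist mulrC divfK // subr_eq0 gt_eqF. Qed.

Lemma card_site_gt0 : (0 < #|site|)%nat.
Proof. by rewrite card_prod card_bool card_ord. Qed.

Definition gadget (lam : R) (lam0 : 0 <= lam) (lam1 : lam < 1) : instance :=
  Instance card_site_gt0 card_site_gt0 (isT : (0 < 3)%nat)
    (gadget_dist_pseudo lam0 (ltW lam1) (far_dist_ge lam0 lam1)).

Section Gadget.
Variables (lam alpha : R).
Hypotheses (lam0 : 0 <= lam) (lam1 : lam < 1).
Local Notation G := (gadget lam0 lam1).

Lemma gadget_quota : #|agents G|%:R / (kk G)%:R <= 2 :> R.
Proof. by rewrite /= card_prod card_bool card_ord natrM mulfK ?pnatr_eq0. Qed.

Lemma gadget_dist_mates c (i j : 'I_3) :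
  i != j -> @dist G (inl (c, i)) (inl (c, j)) = 3 + lam.
Proof.
by move=> ij; rewrite /= /gadget_dist /= eqxx /slot_dist /= (negbTE ij) mul1r.
Qed.

Lemma gadget_dist_center c i j :
  @dist G (inl (c, i)) (inr (c, j)) = slot_dist lam (false, i - j) (true, 0).
Proof. by rewrite /= /gadget_dist /= eqxx /slot_dist /= subr0. Qed.

Lemma gadget_dist_own_center c i : @dist G (inl (c, i)) (inr (c, i)) = 1.
Proof. by rewrite gadget_dist_center subrr /slot_dist mul0r addr0. Qed.

Lemma gadget_dist_next_center c i : @dist G (inl (c, i + 1)) (inr (c, i)) = 2 + lam.
Proof. by rewrite gadget_dist_center addrAC subrr add0r /slot_dist mul1r. Qed.

Lemma gadget_dist_prev_center c i :
  @dist G (inl (c, i + 1 + 1)) (inr (c, i)) = 4 + lam.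
Proof.
by rewrite gadget_dist_center addrAC (addrAC i) subrr add0r /slot_dist mul1r.
Qed.

Lemma gadget_dist_other_copy (a y : site) :
  y.1 != a.1 -> @dist G (inl a) (inr y) = far_dist lam.
Proof. by move=> ya; rewrite /= /gadget_dist /= eq_sym (negbTE ya). Qed.

Lemma mate_cost_own : lam * (3 + lam) + (1 - lam) * 1 = (1 + lam) ^+ 2.
Proof. by ring. Qed.

Lemma mate_cost_next : lam * (3 + lam) + (1 - lam) * (2 + lam) = 2 * (1 + lam).
Proof. by ring. Qed.

Lemma mate_cost_prev : lam * (3 + lam) + (1 - lam) * (4 + lam) = 4.
Proof. by ring. Qed.

Variable X : clustering G.

Definition served_locally (a : site) : bool := (ctr X (assign X a)).1 == a.1.

Lemma loss_not_served_locally a : ~~ served_locally a -> 4 <= loss_in lam X a.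
Proof.
move=> far; have := loss_in_ge_mate lam0 (erefl (assign X a)).
by rewrite dist_refl mulr0 add0r gadget_dist_other_copy // far_distK.
Qed.

Lemma loss_shared_cluster c i j k :
  i != j -> assign X (c, j) = assign X (c, i) -> ctr X (assign X (c, i)) = (c, k) ->
  (forall t, (ctr X t).1 = c -> t = assign X (c, i)) ->
  forall m, 4 <= loss_in lam X (c, m) \/
    lam * (3 + lam) + (1 - lam) * @dist G (inl (c, m)) (inr (c, k))
    <= loss_in lam X (c, m).
Proof.
move=> ij ji ctr_i only_i m.
have [near|far] := boolP (served_locally (c, m)); last first.
  by left; exact: loss_not_served_locally.
right; have mi : assign X (c, m) = assign X (c, i) by apply: only_i; exact/eqP.
pose mate := if m == i then j else i.
have m_mate : m != mate by rewrite /mate; case: (m =P i) => [->|/eqP].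
rewrite -(gadget_dist_mates c m_mate) -ctr_i -mi; apply: loss_in_ge_mate => //.
by rewrite mi /mate; case: (m =P i).
Qed.

Hypotheses (alpha0 : 0 <= alpha) (alpha_lt : alpha * (1 + lam) < 2).

Lemma gadget_blocking_pair c i :
  alpha * (1 + lam) ^+ 2 < loss_in lam X (c, i) ->
  alpha * (2 * (1 + lam)) < loss_in lam X (c, i + 1) -> ~ in_core lam alpha X.
Proof.
move=> lt_i lt_next.
apply: (blocking_pair (X := X) (a := (c, i)) (b := (c, i + 1)) (y := (c, i))
  lam0 alpha0 _ gadget_quota).
- by rewrite xpair_eqE eqxx ord3_neq_add1.
- by rewrite gadget_dist_mates ?ord3_neq_add1 // gadget_dist_own_center mate_cost_own.
- by rewrite gadget_dist_mates ?ord3_neq_add1 // gadget_dist_next_center mate_cost_next.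
Qed.

Lemma gadget_not_in_core : ~ in_core lam alpha X.
Proof.
have [cost_own cost_own4 cost_next] := alpha_pair_costs lam0 (ltW lam1) alpha_lt.
have [c sparse] := bool_fiber_le1 (fun t => (ctr X t).1) (eq_leq (card_ord 3)).
set L := [set i : 'I_3 | served_locally (c, i)].
have [two_local | one_local] := ltnP 1 #|L|.
- have [i [j [iL jL ij]]] := card_gt1P two_local; rewrite !inE in iL jL.
  have only_i t : (ctr X t).1 = c -> t = assign X (c, i).
    by move=> tc; apply: (card_le1_eqP sparse); rewrite inE ?tc.
  have ji : assign X (c, j) = assign X (c, i) by apply: only_i; exact/eqP.
  case ctr_i: (ctr X (assign X (c, i))) => [c' k].
  move: iL; rewrite /served_locally ctr_i => /eqP /= c'c; subst c'.
  have lb := loss_shared_cluster ij ji ctr_i only_i.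
  apply: (gadget_blocking_pair (c := c) (i := k + 1)).
  + by case: (lb (k + 1)); rewrite ?gadget_dist_next_center ?mate_cost_next; lra.
  + by case: (lb (k + 1 + 1)); rewrite ?gadget_dist_prev_center ?mate_cost_prev; lra.
- have : (1 < #|~: L|)%nat by have := cardsC L; rewrite card_ord; lia.
  case/card_gt1P => i [j [iR jR ij]]; rewrite !inE in iR jR.
  move: (loss_not_served_locally iR) (loss_not_served_locally jR).
  have [->|->] := ord3_adjacent ij => far_i far_j.
  + by apply: (gadget_blocking_pair (c := c) (i := i)); lra.
  + by apply: (gadget_blocking_pair (c := c) (i := j)); lra.
Qed.

End Gadget.

Theorem mainTheorem9 (lam alpha : R) :
  0 <= lam <= 1 ->
  1 <= alpha ->
  alpha < (Num.sqrt (lam ^+ 2 - 2 * lam + 5) - lam + 1) / 2 ->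
  exists I : instance, forall X : clustering I, ~ in_core lam alpha X.
Proof.
move=> /andP[lam0 _] alpha1 alpha_lt.
have alpha_lt2 := alpha_mul_lt2 lam0 alpha1 alpha_lt.
have lam1 : lam < 1 by nra.
exists (gadget lam0 lam1) => X.
by apply: gadget_not_in_core; lra.
Qed.
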